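(* Let $G$ be the final graph of the uncoordinated construction (described in the context) on a finite point set $P\subset\mathbb{R}^d$ with parameter $s>1$. Let $\mathcal{W}$ be the collection consisting of, for each edge $pq$ of $G$, the pair $(B_r(p),B_r(q))$ with $r=|pq|/(2s+2)$. Then $\mathcal{W}$ is an $s$-well-separated pair decomposition of $P$, and its size equals the number of edges of $G$.
   Context: Fix $d\ge 1$. Let $P\subset\mathbb{R}^d$ be a finite set of $n\ge 2$ points, $|xy|$ the Euclidean distance, $s>1$. For $p\in P$ and $r\ge0$, $B_r(p)=\{x\in P: |px|\le r\}$. Uncoordinated construction: start with the graph $G$ on vertex set $P$ with no edges. Every ordered pair $(p,q)$ of distinct points of $P$ is processed exactly once, in an arbitrary order, one at a time. When $(p,q)$ is processed, the edge $pq$ is added to $G$ unless $G$ currently contains an edge whose endpoints can be labeled $p',q'$ with $|pp'|\le |p'q'|/(2s+2)$ and $|qq'|\le |p'q'|/(2s+2)$. $G$ is the graph after all pairs are processed. For $A,B\subseteq P$: $\mathrm{diam}(A)=\max_{x,y\in A}|xy|$, $d(A,B)=\min_{x\in A,y\in B}|xy|$; $(A,B)$ is $s$-separated if $d(A,B)\ge s\cdot\max(\mathrm{diam}(A),\mathrm{diam}(B))$. An $s$-well-separated pair decomposition ($s$-WSPD) of $P$ is a collection of pairs $\{(A_i,B_i)\}_{i=1}^m$ with $A_i,B_i\subseteq P$, each pair $s$-separated, such that for any two points $p,q\in P$ there is some $i$ with $p\in A_i$ and $q\in B_i$; $m$ is its size. *)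

From HB Require Import structures.
From mathcomp Require Import all_boot all_order all_algebra.
From mathcomp Require Import reals.
Set Implicit Arguments. Unset Strict Implicit. Unset Printing Implicit Defensive.
Import Order.TTheory GRing.Theory Num.Theory.
Local Open Scope ring_scope.

Section WSPD.
Variables (R : realType) (d n : nat).
(* The point set P is {pt i | i : 'I_n}, with pt injective. *)
Variable pt : 'I_n -> 'rV[R]_d.

Definition edist (x y : 'rV[R]_d) : R :=
  Num.sqrt (\sum_(k < d) (x ord0 k - y ord0 k) ^+ 2).

Definition pdist (i j : 'I_n) : R := edist (pt i) (pt j).

Definition ball (r : R) (p : 'I_n) : {set 'I_n} :=
  [set x | pdist p x <= r].

Definition diam (A : {set 'I_n}) : R :=
  \big[Num.max/0]_(x in A) \big[Num.max/0]_(y in A) pdist x y.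

(* d(A,B) = min_{x in A, y in B} |xy|.  The neutral element diam(P) is
   >= every distance, so for nonempty A, B this is exactly the minimum. *)
Definition setdist (A B : {set 'I_n}) : R :=
  \big[Num.min/diam setT]_(x in A) \big[Num.min/diam setT]_(y in B) pdist x y.

Definition s_separated (s : R) (A B : {set 'I_n}) : Prop :=
  setdist A B >= s * Num.max (diam A) (diam B).

(* s-WSPD: every pair s-separated, every two distinct points separated by
   some pair (in either order: pairs are unordered). *)
Definition is_wspd (s : R) (W : {set {set 'I_n} * {set 'I_n}}) : Prop :=
  (forall AB, AB \in W -> s_separated s AB.1 AB.2) /\
  (forall p q : 'I_n, p != q -> exists2 AB, AB \in W &
      (p \in AB.1 /\ q \in AB.2) \/ (q \in AB.1 /\ p \in AB.2)).

(* Graphs: set of (unordered) edges, each edge a 2-element set {p, q}. *)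
Definition blocked (s : R) (E : {set {set 'I_n}}) (p q : 'I_n) : bool :=
  [exists p' : 'I_n, exists q' : 'I_n,
     [&& [set p'; q'] \in E,
         pdist p p' <= pdist p' q' / (2 * s + 2) &
         pdist q q' <= pdist p' q' / (2 * s + 2)]].

Definition step (s : R) (E : {set {set 'I_n}}) (pq : 'I_n * 'I_n)
  : {set {set 'I_n}} :=
  if blocked s E pq.1 pq.2 then E else [set pq.1; pq.2] |: E.

Definition uncoord_graph (s : R) (ord : seq ('I_n * 'I_n)) : {set {set 'I_n}} :=
  foldl (step s) set0 ord.

Definition valid_order (ord : seq ('I_n * 'I_n)) : Prop :=
  uniq ord /\ (forall pq : 'I_n * 'I_n, (pq \in ord) = (pq.1 != pq.2)).

(* The collection W: for each edge pq (oriented by index, p < q) the pair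
   (B_r(p), B_r(q)) with r = |pq|/(2s+2). *)
Definition edge_wspd (s : R) (E : {set {set 'I_n}})
  : {set {set 'I_n} * {set 'I_n}} :=
  [set (ball (pdist pq.1 pq.2 / (2 * s + 2)) pq.1,
        ball (pdist pq.1 pq.2 / (2 * s + 2)) pq.2)
   | pq in [set pq : 'I_n * 'I_n | (pq.1 < pq.2)%N && ([set pq.1; pq.2] \in E)]].

End WSPD.

From HB Require Import structures.
From mathcomp Require Import all_boot all_order all_algebra.
From mathcomp Require Import reals.
From mathcomp Require Import ring lra.
Import Order.TTheory GRing.Theory Num.Theory.
Local Open Scope ring_scope.
Set Implicit Arguments. Unset Strict Implicit.

(* With r = |pq|/(2s+2), the balls B_r(p) and B_r(q) have diameter at most 2r
   and lie at distance at least |pq| - 2r = 2sr, so they are s-separated.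
   Once (p,q) has been processed, G contains an edge p'q' with p near p' and
   q near q', which puts p and q in the ball pair of p'q': the pairs cover P.
   Finally no two edges of G give the same ball pair: if the ball pairs of
   ab and ce coincide, then a and b lie in the balls around c and e, so
   whichever of the two edges came later would have been blocked by the other. *)

Section EuclideanDistance.
Variables (R : realType) (d : nat).
Implicit Types (x y z : 'rV[R]_d) (a b : 'I_d -> R).

Lemma sum_mul_sqr_le a b :
  (\sum_i a i * b i) ^+ 2 <= (\sum_i a i ^+ 2) * (\sum_i b i ^+ 2).
Proof.
set A := \sum_i a i ^+ 2; set B := \sum_i b i ^+ 2; set C := \sum_i a i * b i.
have B_ge0 : 0 <= B by apply: sumr_ge0 => i _; apply: sqr_ge0.
have [B0 | B_neq0] := eqVneq B 0.
  have b0 i : b i = 0.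
    by apply/eqP; rewrite -sqrf_eq0; apply/eqP/(psumr_eq0P _ B0) => // j _; apply: sqr_ge0.
  by rewrite /C big1 ?expr0n ?B0 ?mulr0 // => i _; rewrite b0 mulr0.
have : 0 <= \sum_i (B * a i - C * b i) ^+ 2 by apply: sumr_ge0 => i _; apply: sqr_ge0.
have -> : \sum_i (B * a i - C * b i) ^+ 2 = B * (A * B - C ^+ 2).
  rewrite (eq_bigr (fun i => B ^+ 2 * a i ^+ 2 - 2 * B * C * (a i * b i) + C ^+ 2 * b i ^+ 2));
    last by move=> i _; ring.
  rewrite big_split sumrB /= -!mulr_sumr -/A -/B -/C; ring.
have B_gt0 : 0 < B by rewrite lt0r B_neq0.
by rewrite pmulr_rge0 // subr_ge0 mulrC.
Qed.

Lemma edistC x y : edist x y = edist y x.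
Proof. by rewrite /edist; congr Num.sqrt; apply: eq_bigr => i _; ring. Qed.

Lemma edist_ge0 x y : 0 <= edist x y.
Proof. exact: sqrtr_ge0. Qed.

Lemma edistxx x : edist x x = 0.
Proof. by rewrite /edist big1 ?sqrtr0 // => i _; rewrite subrr expr0n. Qed.

Lemma edist_triangle x y z : edist x z <= edist x y + edist y z.
Proof.
rewrite /edist.
set a := fun i : 'I_d => x ord0 i - y ord0 i.
set b := fun i : 'I_d => y ord0 i - z ord0 i.
have -> : \sum_(k < d) (x ord0 k - z ord0 k) ^+ 2 =
          \sum_k a k ^+ 2 + 2 * \sum_k a k * b k + \sum_k b k ^+ 2.
  by rewrite mulr_sumr -!big_split /=; apply: eq_bigr => i _; rewrite /a /b; ring.
rewrite -/(\sum_k a k ^+ 2) -/(\sum_k b k ^+ 2).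
set A := \sum_k a k ^+ 2; set B := \sum_k b k ^+ 2; set C := \sum_k a k * b k.
have A_ge0 : 0 <= A by apply: sumr_ge0 => i _; apply: sqr_ge0.
have B_ge0 : 0 <= B by apply: sumr_ge0 => i _; apply: sqr_ge0.
have C_le : C <= Num.sqrt A * Num.sqrt B.
  rewrite -sqrtrM // (le_trans (real_ler_norm (num_real C))) // -sqrtr_sqr.
  exact/ler_wsqrtr/sum_mul_sqr_le.
rewrite -[_ + _ in X in _ <= X]ger0_norm ?addr_ge0 ?sqrtr_ge0 // -sqrtr_sqr.
apply: ler_wsqrtr.
have := sqr_sqrtr A_ge0; have := sqr_sqrtr B_ge0; nra.
Qed.

End EuclideanDistance.

Lemma set2_eqP (T : finType) (a b c e : T) :
  [set a; b] = [set c; e] -> (a = c /\ b = e) \/ (a = e /\ b = c).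
Proof.
move=> E.
have in_ce x : x \in [set a; b] -> x = c \/ x = e by rewrite E => /set2P.
have in_ab x : x \in [set c; e] -> x = a \/ x = b by rewrite -E => /set2P.
move: (in_ce a (set21 _ _)) (in_ce b (set22 _ _)) (in_ab c (set21 _ _)) (in_ab e (set22 _ _)).
by move=> [] ? [] ? [] ? [] ?; subst; auto.
Qed.

Lemma set2_ltn_inj n (a b c e : 'I_n) :
  (a < b)%N -> (c < e)%N -> [set a; b] = [set c; e] -> (a, b) = (c, e).
Proof.
move=> ab ce; case/set2_eqP=> [[-> ->] // | [ae bc]].
by move: ce; rewrite -bc -ae ltnNge (ltnW ab).
Qed.

Section UncoordinatedConstruction.
Variables (R : realType) (d n : nat) (pt : 'I_n -> 'rV[R]_d) (s : R).
Hypothesis s_ge0 : 0 <= s.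
Implicit Types (a b c e p q x y : 'I_n) (E F : {set {set 'I_n}}).

Lemma pdistC a b : pdist pt a b = pdist pt b a.
Proof. exact: edistC. Qed.

Lemma pdist_ge0 a b : 0 <= pdist pt a b.
Proof. exact: edist_ge0. Qed.

Lemma pdistxx a : pdist pt a a = 0.
Proof. exact: edistxx. Qed.

Lemma pdist_triangle a b c : pdist pt a c <= pdist pt a b + pdist pt b c.
Proof. exact: edist_triangle. Qed.

Lemma ball_center r a : 0 <= r -> a \in ball pt r a.
Proof. by rewrite inE pdistxx. Qed.

Lemma pdist_le_diam (A : {set 'I_n}) x y : x \in A -> y \in A -> pdist pt x y <= diam pt A.
Proof. by move=> xA yA; apply: (bigmax_sup x) => //; apply: (bigmax_sup y). Qed.

Lemma diam_ball_le r c : 0 <= r -> diam pt (ball pt r c) <= 2 * r.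
Proof.
move=> r_ge0; apply: bigmax_le => [|x]; first lra.
rewrite inE => cx; apply: bigmax_le => [|y]; first lra.
rewrite inE => cy; have := pdist_triangle x c y; rewrite [pdist _ x c]pdistC; lra.
Qed.

Lemma setdist_balls_ge r a b :
  0 <= r -> pdist pt a b - 2 * r <= setdist pt (ball pt r a) (ball pt r b).
Proof.
move=> r_ge0.
have ab_le : pdist pt a b <= diam pt [set: 'I_n] by apply: pdist_le_diam; rewrite inE.
apply: le_bigmin => [|x]; first lra.
rewrite inE => ax; apply: le_bigmin => [|y]; first lra.
rewrite inE => b_y; have := pdist_triangle a x b; have := pdist_triangle x y b.
rewrite [pdist _ y b]pdistC; lra.
Qed.

Definition radius a b : R := pdist pt a b / (2 * s + 2).

Definition ball_pair a b := (ball pt (radius a b) a, ball pt (radius a b) b).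

Let scale_gt0 : 0 < 2 * s + 2.
Proof. by have := s_ge0; lra. Qed.

Lemma radius_ge0 a b : 0 <= radius a b.
Proof. exact/divr_ge0/ltW/scale_gt0/pdist_ge0. Qed.

Lemma radiusC a b : radius a b = radius b a.
Proof. by rewrite /radius pdistC. Qed.

Lemma ball_pair_separated a b : s_separated pt s (ball_pair a b).1 (ball_pair a b).2.
Proof.
rewrite /s_separated /=; set r := radius a b.
have r_ge0 : 0 <= r := radius_ge0 a b.
have ab_eq : pdist pt a b = (2 * s + 2) * r by rewrite /r /radius mulrC divfK // gt_eqF.
have max_le : Num.max (diam pt (ball pt r a)) (diam pt (ball pt r b)) <= 2 * r.
  by rewrite ge_max !diam_ball_le.
apply: le_trans (setdist_balls_ge a b r_ge0); rewrite ab_eq.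
have := ler_wpM2l s_ge0 max_le; lra.
Qed.

Lemma blockedP E p q :
  reflect (exists c e, [/\ [set c; e] \in E, pdist pt p c <= radius c e & pdist pt q e <= radius c e])
          (blocked pt s E p q).
Proof.
apply: (iffP existsP) => [[c /existsP[e /and3P[]]] | [c [e [? ? ?]]]]; first by exists c, e.
by exists c; apply/existsP; exists e; apply/and3P.
Qed.

Lemma blockedC E p q : blocked pt s E p q -> blocked pt s E q p.
Proof.
move=> /blockedP[c [e [ce pc qe]]]; apply/blockedP; exists e, c.
by rewrite setUC radiusC.
Qed.

Lemma blockedS E F p q : E \subset F -> blocked pt s E p q -> blocked pt s F p q.
Proof.
by move=> /subsetP EF /blockedP[c [e [/EF ce pc qe]]]; apply/blockedP; exists c, e.
Qed.

Definition pair_edges E := {in E, forall A : {set 'I_n}, #|A| = 2}.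

Definition ball_pairs_distinct E := forall a b c e,
  [set a; b] \in E -> [set c; e] \in E -> ball_pair a b = ball_pair c e ->
  [set a; b] = [set c; e].

Lemma blocked_by_equal_ball_pair E a b c e :
  [set c; e] \in E -> ball_pair a b = ball_pair c e -> blocked pt s E a b.
Proof.
rewrite /ball_pair => ce [eq1 eq2]; apply/blockedP; exists c, e; split => //.
- by have := ball_center a (radius_ge0 a b); rewrite eq1 inE pdistC.
- by have := ball_center b (radius_ge0 a b); rewrite eq2 inE pdistC.
Qed.

Lemma subset_step E pq : E \subset step pt s E pq.
Proof. by rewrite /step; case: ifP => _; [exact: subxx | exact: subsetUr]. Qed.

Lemma step_blocked E p q : blocked pt s (step pt s E (p, q)) p q.
Proof.
rewrite /step /=; case: ifP => // _; apply/blockedP; exists p, q.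
by rewrite setU11 !pdistxx radius_ge0.
Qed.

Lemma step_pair_edges E p q : p != q -> pair_edges E -> pair_edges (step pt s E (p, q)).
Proof.
move=> pq E2; rewrite /step /=; case: ifP => // _ A.
by rewrite in_setU1 => /predU1P[-> | /E2 //]; rewrite cards2 pq.
Qed.

Lemma step_ball_pairs_distinct E p q :
  ball_pairs_distinct E -> ball_pairs_distinct (step pt s E (p, q)).
Proof.
move=> Edist; rewrite /step /=; case: ifPn => // unblocked.
have new_old a b c e :
    [set a; b] = [set p; q] -> [set c; e] \in E -> ball_pair a b != ball_pair c e.
  case/set2_eqP=> [[-> ->] | [-> ->]] ce; apply: contraNneq unblocked => eq_pairs.
  - exact: blocked_by_equal_ball_pair ce eq_pairs.
  - exact/blockedC/(blocked_by_equal_ball_pair ce eq_pairs).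
move=> a b c e; rewrite !in_setU1 => /predU1P[ab | abE] /predU1P[ce | ceE] eq_pairs.
- by rewrite ab ce.
- by move: (new_old _ _ _ _ ab ceE); rewrite eq_pairs eqxx.
- by move: (new_old _ _ _ _ ce abE); rewrite eq_pairs eqxx.
- exact: Edist.
Qed.

Lemma subset_foldl_step E ord : E \subset foldl (step pt s) E ord.
Proof.
elim: ord E => [|pq ord IH] E /=; first exact: subxx.
exact: subset_trans (subset_step E pq) (IH _).
Qed.

Lemma uncoord_graph_blocked ord pq :
  pq \in ord -> blocked pt s (uncoord_graph pt s ord) pq.1 pq.2.
Proof.
rewrite /uncoord_graph; elim: ord set0 => [|pq' ord IH] E //=.
rewrite inE => /predU1P[-> | /IH //]; case: pq' => p q.
exact: blockedS (subset_foldl_step _ _) (step_blocked E p q).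
Qed.

Lemma uncoord_graph_invariants ord :
  (forall pq, pq \in ord -> pq.1 != pq.2) ->
  pair_edges (uncoord_graph pt s ord) /\ ball_pairs_distinct (uncoord_graph pt s ord).
Proof.
rewrite /uncoord_graph.
have : pair_edges set0 /\ ball_pairs_distinct set0 by split => [x|a b c e]; rewrite inE.
elim: ord set0 => [|[p q] ord IH] E //= [E2 Edist] ord_neq.
apply: IH => [|pq ord_pq]; last by apply: ord_neq; rewrite inE ord_pq orbT.
split; last exact: step_ball_pairs_distinct.
by apply: step_pair_edges => //; apply: (ord_neq (p, q)); rewrite mem_head.
Qed.

Lemma edge_wspd_cover E p q : pair_edges E -> blocked pt s E p q ->
  exists2 AB, AB \in edge_wspd pt s E &
    (p \in AB.1 /\ q \in AB.2) \/ (q \in AB.1 /\ p \in AB.2).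
Proof.
move=> E2 /blockedP[c [e [ce pc qe]]].
have : c != e by have := E2 _ ce; rewrite cards2; case: eqP.
rewrite neq_ltn => /orP[lt | lt].
- exists (ball_pair c e); first by apply/imsetP; exists (c, e); rewrite // inE lt ce.
  by left; split; rewrite inE pdistC.
- exists (ball_pair e c); first by apply/imsetP; exists (e, c); rewrite // inE lt setUC ce.
  by right; split; rewrite inE pdistC radiusC.
Qed.

Definition oriented_edges E :=
  [set pq : 'I_n * 'I_n | (pq.1 < pq.2)%N && ([set pq.1; pq.2] \in E)].

Lemma card_oriented_edges E : pair_edges E -> #|oriented_edges E| = #|E|.
Proof.
move=> E2.
have E_eq : E = [set [set pq.1; pq.2] | pq in oriented_edges E].
  apply/setP => A; apply/idP/imsetP => [AE | [pq]]; last by rewrite inE => /andP[_ ?] ->.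
  have /cards2P[a [b [ab A_ab]]] : #|A| == 2 by rewrite E2.
  rewrite A_ab in AE *; case: (ltngtP a b) => [lt | lt | /val_inj eq_ab].
  - by exists (a, b); rewrite // inE lt.
  - by exists (b, a); [rewrite inE /= lt setUC | rewrite setUC].
  - by rewrite eq_ab eqxx in ab.
rewrite [in RHS]E_eq card_in_imset // => -[a b] [c e].
by rewrite !inE /= => /andP[ab _] /andP[ce _]; apply: set2_ltn_inj.
Qed.

Lemma card_edge_wspd E :
  pair_edges E -> ball_pairs_distinct E -> #|edge_wspd pt s E| = #|E|.
Proof.
move=> E2 Edist; rewrite -card_oriented_edges //.
apply: (card_in_imset (f := fun pq => ball_pair pq.1 pq.2)) => -[a b] [c e].
by rewrite !inE /= => /andP[ab abE] /andP[ce ceE] /(Edist _ _ _ _ abE ceE); apply: set2_ltn_inj.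
Qed.

End UncoordinatedConstruction.

Theorem theorem4 (R : realType) (d n : nat) (pt : 'I_n -> 'rV[R]_d) (s : R)
  (ord : seq ('I_n * 'I_n)) :
  (1 <= d)%N -> (2 <= n)%N -> injective pt -> 1 < s ->
  valid_order ord ->
  let G := uncoord_graph pt s ord in
  is_wspd pt s (edge_wspd pt s G) /\ #|edge_wspd pt s G| = #|G|.
Proof.
move=> _ _ _ s_gt1 [_ ord_pairs] G.
have s_ge0 : 0 <= s by apply/ltW/(lt_trans ltr01).
have ord_neq pq : pq \in ord -> pq.1 != pq.2 by rewrite ord_pairs.
have [G2 Gdist] := uncoord_graph_invariants pt s_ge0 ord_neq.
split; [split | exact: card_edge_wspd].
- by move=> _ /imsetP[[a b] _ ->]; apply: (ball_pair_separated pt s_ge0).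
- move=> p q pq; apply: edge_wspd_cover => //.
  by apply: (uncoord_graph_blocked pt s_ge0 (pq := (p, q))); rewrite ord_pairs.
Qed.
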